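(* Let $t\ge1$ be an integer and let $p(\cdot\mid\cdot)$ be the transition probability density on $\mathbb{R}$ given by $$p(\mu_i\mid\mu_{i-1})=c_t\left(1+\frac{\mu_{i-1}^2}{t}\right)^{t/2}\left(1+\frac{\mu_{i-1}^2}{t}+\frac{\mu_i^2}{t}\right)^{-(t+1)/2},$$ where $c_t$ is the normalizing constant (depending only on $t$); equivalently, given $\mu_{i-1}$, the variable $\mu_i(1+\mu_{i-1}^2/t)^{-1/2}$ has the Student t distribution with $t$ degrees of freedom. Let $a>0$, set $$h(a)=\left\{a^2\left[\left(1+\frac{a^2}{t}\right)^{t/(t+1)}-1\right]^{-1}-t\right\}^{1/2},$$ and define the subprobability density $$p_{\min}(\mu)=\begin{cases}p(\mu\mid a)&\text{for }|\mu|\le h(a),\\ p(\mu\mid 0)&\text{for }|\mu|>h(a).\end{cases}$$ Then $|\mu_{i-1}|\le a$ implies $p(\mu_i\mid\mu_{i-1})\ge p_{\min}(\mu_i)$ for all $\mu_i$. Consequently, letting $\nu$ be the probability measure with density $p_{\min}/\beta$, the transition kernel $P$ with density $p(\cdot\mid\cdot)$ satisfies $P(x,\cdot)\ge\beta\mathbf{1}(x\in J)\nu(\cdot)$ for all $x$, with $J=[-a,a]$ and $$\beta=1-\Pr\left(|\vartheta|\le h(a)\right)+\Pr\left(|\vartheta|\le\left(1+\frac{a^2}{t}\right)^{-1/2}h(a)\right),$$ where $\vartheta$ has the Student t distribution with $t$ degrees of freedom.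
   Context: This is the transition density of the $\mu$-marginal of the two-step Gibbs sampler for the posterior of $(\mu,\kappa)$ in a normal model $N(\mu,\kappa^{-1})$ with $t$ observations, prior $p(\mu,\kappa)\propto\kappa^{-1}$, normalized to sample mean $0$ and $s^2=t$. *)

From HB Require Import structures.
From mathcomp Require Import all_boot all_order all_algebra.
From mathcomp Require Import all_classical all_reals all_analysis.
Set Implicit Arguments. Unset Strict Implicit. Unset Printing Implicit Defensive.
Import Order.TTheory GRing.Theory Num.Theory.
Import numFieldNormedType.Exports.
Local Open Scope classical_set_scope.
Local Open Scope ring_scope.

Section Defs.
Variable R : realType.
Notation mu := (@lebesgue_measure R).

Definition tkern (t : nat) (u : R) : R :=
  (1 + u ^+ 2 / t%:R) `^ (- ((t%:R + 1) / 2)).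

Definition student_c (t : nat) : R :=
  (fine (\int[mu]_u (tkern t u)%:E))^-1.

Definition student_pdf (t : nat) (u : R) : R := student_c t * tkern t u.

Definition student_Pr_abs_le (t : nat) (r : R) : R :=
  fine (\int[mu]_(u in [set u : R | `|u| <= r]) (student_pdf t u)%:E).

Definition pdens (t : nat) (x y : R) : R :=
  student_c t * (1 + x ^+ 2 / t%:R) `^ (t%:R / 2)
  * (1 + x ^+ 2 / t%:R + y ^+ 2 / t%:R) `^ (- ((t%:R + 1) / 2)).

Definition hfun (t : nat) (a : R) : R :=
  Num.sqrt (a ^+ 2 / ((1 + a ^+ 2 / t%:R) `^ (t%:R / (t%:R + 1)) - 1) - t%:R).

Definition pmin (t : nat) (a y : R) : R :=
  if `|y| <= hfun t a then pdens t a y else pdens t 0 y.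

Definition beta (t : nat) (a : R) : R :=
  1 - student_Pr_abs_le t (hfun t a)
    + student_Pr_abs_le t ((1 + a ^+ 2 / t%:R) `^ (- (1 / 2)) * hfun t a).

Definition Pkern (t : nat) (x : R) (A : set R) : \bar R :=
  \int[mu]_(y in A) (pdens t x y)%:E.

Definition nu (t : nat) (a : R) (A : set R) : \bar R :=
  \int[mu]_(y in A) (pmin t a y / beta t a)%:E.

End Defs.

From HB Require Import structures.
From mathcomp Require Import all_boot all_order all_algebra.
From mathcomp Require Import all_classical all_reals all_analysis.
From mathcomp Require Import ring lra measurable_realfun.
Import Order.TTheory GRing.Theory Num.Theory.
Import numFieldNormedType.Exports.
Local Open Scope classical_set_scope.
Local Open Scope ring_scope.

(* With r = t/(t+1), S = 1 + x^2/t and V = y^2/t one has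
     p(y | x) = c_t (S^r / (S + V))^((t+1)/2).
   For |x| <= a the parameter S ranges over [1, 1 + a^2/t].  Since S |-> S^r is
   concave, S^r - m (S + V) is concave for every m, so S |-> S^r / (S + V) is
   quasi-concave and is bounded below on the interval by its value at an endpoint,
   i.e. by p(y | 0) or p(y | a); h(a) is exactly the |y| at which the two endpoint
   values cross, which gives the pointwise bound by p_min.  On |y| <= h(a) the
   substitution y = (1 + a^2/t)^(1/2) u turns p(y | a) into the Student density,
   and on |y| > h(a) the density p(y | 0) is the Student density, so p_min has
   total mass beta; beta > 0 because p_min is positive. *)

Section powR_concave.
Context {R : realType} (r : R).
Hypotheses (r_gt0 : 0 < r) (r_lt1 : r < 1).

Lemma powR_le_tangent1 (z : R) : 0 < z -> z `^ r <= 1 + r * (z - 1).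
Proof.
(* Young's inequality for the conjugate exponents 1/r and 1/(1-r). *)
move=> z_gt0.
have r'_gt0 : 0 < 1 - r by rewrite subr_gt0.
have ri_gt0 : 0 < r^-1 by rewrite invr_gt0.
have r'i_gt0 : 0 < (1 - r)^-1 by rewrite invr_gt0.
have conj : r^-1^-1 + (1 - r)^-1^-1 = 1 by rewrite !invrK; ring.
have := @conjugate_powR R (z `^ r) 1 _ _ (powR_ge0 z r) ler01 ri_gt0 r'i_gt0 conj.
rewrite -powRrM mulfV ?gt_eqF // powRr1 ?(ltW z_gt0) // powR1 !invrK mulr1.
by move/le_trans; apply; lra.
Qed.

Lemma powR_le_tangent (S e : R) : 0 < S -> 0 < e ->
  e `^ r <= S `^ r + r * S `^ r / S * (e - S).
Proof.
move=> S_gt0 e_gt0.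
have -> : e `^ r = S `^ r * (e / S) `^ r.
  by rewrite -powRM ?ltW ?divr_gt0 // mulrC divfK // gt_eqF.
have -> : S `^ r + r * S `^ r / S * (e - S) = S `^ r * (1 + r * (e / S - 1)).
  by field; rewrite gt_eqF.
by rewrite ler_wpM2l ?powR_ge0 // powR_le_tangent1 ?divr_gt0.
Qed.

Lemma powR_chord (a S b : R) : 0 < a -> a <= S -> S <= b ->
  (b - S) * a `^ r + (S - a) * b `^ r <= (b - a) * S `^ r.
Proof.
move=> a_gt0 aS Sb.
have S_gt0 : 0 < S by lra.
have ta := @powR_le_tangent S a S_gt0 a_gt0.
have tb := @powR_le_tangent S b S_gt0 (lt_le_trans S_gt0 Sb).
set k := r * S `^ r / S in ta tb.
have ka : (b - S) * a `^ r <= (b - S) * (S `^ r + k * (a - S)).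
  by rewrite ler_wpM2l ?subr_ge0.
have kb : (S - a) * b `^ r <= (S - a) * (S `^ r + k * (b - S)).
  by rewrite ler_wpM2l ?subr_ge0.
have -> : (b - a) * S `^ r =
    (b - S) * (S `^ r + k * (a - S)) + (S - a) * (S `^ r + k * (b - S)) by ring.
exact: lerD.
Qed.

Definition powR_ratio (V S : R) := S `^ r / (S + V).

Lemma powR_ratio_ge_min (V S B : R) : 0 <= V -> 1 <= S -> S <= B ->
  Num.min (powR_ratio V 1) (powR_ratio V B) <= powR_ratio V S.
Proof.
move=> V_ge0 S_ge1 SB.
have [B1|B_neq1] := eqVneq B 1.
  have -> : S = 1 by lra.
  by rewrite ge_min lexx.
have B_gt1 : 1 < B by rewrite lt_neqAle eq_sym B_neq1 (le_trans S_ge1 SB).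
set m := Num.min _ _.
(* m (X + V) <= X^r holds at X = 1 and X = B, hence in between by concavity. *)
have ratioP X : 1 <= X -> (m * (X + V) <= X `^ r) = (m <= powR_ratio V X).
  by move=> X_ge1; rewrite /powR_ratio ler_pdivlMr //; lra.
have m1 : m * (1 + V) <= 1 `^ r by rewrite ratioP // ge_min lexx.
have mB : m * (B + V) <= B `^ r by rewrite ratioP ?ge_min ?lexx ?orbT //; lra.
rewrite -ratioP // -(@ler_pM2l _ (B - 1)) ?subr_gt0 //.
apply: (le_trans _ (@powR_chord 1 S B ltr01 S_ge1 SB)).
have -> : (B - 1) * (m * (S + V)) = (B - S) * (m * (1 + V)) + (S - 1) * (m * (B + V)).
  by ring.
by apply: lerD; rewrite ler_wpM2l ?subr_ge0.
Qed.

End powR_concave.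

Section real_analysis.
Context {R : realType}.
Notation mu := (@lebesgue_measure R).

Lemma continuous_powR_pos (f : R -> R) (p : R) :
  continuous f -> (forall y, 0 < f y) -> continuous (fun y => f y `^ p).
Proof.
move=> f_cont f_gt0 y.
apply: (@continuous_comp _ _ _ f (fun z => z `^ p)); first exact: f_cont.
apply: differentiable_continuous; apply/derivable1_diffP.
by apply: derivable_powR; rewrite in_itv /= andbT.
Qed.

Lemma continuous_cauchy : continuous (fun u : R => (1 + u ^+ 2)^-1).
Proof.
move=> y; apply: cvgV; first by rewrite gt_eqF // ltr_pwDl ?sqr_ge0.
by apply: cvgD; [exact: cvg_cst | exact: exprn_continuous].
Qed.

Lemma integral_cauchy : (\int[mu]_u ((1 + u ^+ 2)^-1)%:E = pi%:E)%E.
Proof.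
have cauchy_ge0 (u : R) : 0 <= (1 + u ^+ 2)^-1 by rewrite invr_ge0 addr_ge0 ?sqr_ge0.
rewrite ge0_symfun_integralT //; last 2 first.
- exact: continuous_cauchy.
- by move=> u /=; rewrite sqrrN.
rewrite -set_itvcy (@ge0_continuous_FTC2y _ (fun u => (1 + u ^+ 2)^-1) atan 0 (pi / 2)).
- by rewrite atan0 -EFinB subr0 -EFinM; congr (_%:E); field.
- by move=> u _.
- exact/continuous_subspaceT/continuous_cauchy.
- exact: cvgy_atan.
- by move=> x _; exact: derivable_atan.
- exact/cvg_at_right_filter/continuous_atan.
- by move=> x _; rewrite derive1_atan.
Qed.

Lemma set_abs_le_itv (r : R) : [set u : R | `|u| <= r] = `[- r, r]%classic.
Proof. by apply/seteqP; split => u /=; rewrite in_itv /= ler_norml. Qed.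

Lemma lbound_le_integral (D : set R) (f : R -> R) (lo hi m : R) :
  measurable D -> `[lo, hi] `<=` D -> measurable_fun D f ->
  (forall x, D x -> 0 <= f x) -> (forall x, lo <= x <= hi -> m <= f x) ->
  0 <= m -> lo < hi ->
  ((m * (hi - lo))%:E <= \int[mu]_(x in D) (f x)%:E)%E.
Proof.
move=> D_meas itv_sub f_meas f_ge0 f_lbound m_ge0 lo_hi.
apply: (@le_trans _ _ (\int[mu]_(x in `[lo, hi]) (f x)%:E)%E); last first.
  by apply: ge0_subset_integral => //; exact/measurable_EFinP.
apply: (@le_trans _ _ (\int[mu]_(x in `[lo, hi]) (cst m%:E x))%E).
  rewrite integral_cst //.
  have := lebesgue_measure_itv `[lo, hi]; rewrite /= lte_fin lo_hi => ->.
  by rewrite -EFinB -EFinM.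
apply: ge0_le_integral => //.
- by apply/measurable_EFinP; exact: measurable_funS f_meas.
Qed.

Lemma integral_itv_scale (f : R -> R) (s b : R) : 0 < s -> 0 <= b ->
  continuous f ->
  (\int[mu]_(y in `[(- (s * b))%R, (s * b)%R]) (f y)%:E =
   \int[mu]_(u in `[(- b)%R, b]) (f (s * u) * s)%:E)%E.
Proof.
move=> s_gt0 b_ge0 f_cont.
have scale_derive : (( *%R s)^`())%classic = cst s.
  by apply/funext => x; rewrite derive1Ml // derive1_id mulr1.
have scale_derivable x : derivable ( *%R s) x 1 by exact: derivableM.
have scale_cont : continuous ( *%R s).
  by move=> x; apply/differentiable_continuous/derivable1_diffP.
rewrite -mulrN (integration_by_substitution_increasing (F := *%R s)).
- by apply: eq_integral => u _; rewrite scale_derive.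
- lra.
- by move=> x y _ _ xy; rewrite ltr_pM2l.
- by rewrite scale_derive; move=> x _; exact: cst_continuous.
- by rewrite scale_derive; apply/cvg_ex; exists s; exact: cvg_cst.
- by rewrite scale_derive; apply/cvg_ex; exists s; exact: cvg_cst.
- split; first by move=> x _.
  + exact/cvg_at_right_filter/scale_cont.
  + exact/cvg_at_left_filter/scale_cont.
- exact/continuous_subspaceT.
Qed.

Lemma ge0_integralT_setUC (E : set R) (f : R -> R) : measurable E ->
  measurable_fun setT f -> (forall x, 0 <= f x) ->
  (\int[mu]_x (f x)%:E =
   \int[mu]_(x in E) (f x)%:E + \int[mu]_(x in ~` E) (f x)%:E)%E.
Proof.
move=> E_meas f_meas f_ge0.
rewrite -(setUv E) ge0_integral_setU ?setUv //.
- exact: measurableC.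
- by apply/measurable_EFinP; exact: f_meas.
- by move=> x _; rewrite lee_fin.
- exact/disj_setPCl.
Qed.

End real_analysis.

Section student_t_transition.
Context {R : realType} {t : nat}.
Hypothesis t_ge1 : (1 <= t)%N.
Notation mu := (@lebesgue_measure R).
Local Notation T := (t%:R : R).

Let T_gt0 : 0 < T. Proof. by rewrite ltr0n. Qed.

Let sqr_divT_ge0 (u : R) : 0 <= u ^+ 2 / T.
Proof. by rewrite divr_ge0 ?sqr_ge0 ?ltW. Qed.

Lemma tkern_gt0 (u : R) : 0 < tkern t u.
Proof. by apply: powR_gt0; have := sqr_divT_ge0 u; lra. Qed.

Lemma continuous_tkern : continuous (@tkern R t).
Proof.
apply: continuous_powR_pos => u; last by have := sqr_divT_ge0 u; lra.
apply: cvgD; first exact: cvg_cst.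
by apply: cvgM; [exact: exprn_continuous | exact: cvg_cst].
Qed.

Lemma measurable_tkern : measurable_fun setT (@tkern R t).
Proof. exact: continuous_measurable_fun continuous_tkern. Qed.

Lemma tkern_le (u v : R) : `|u| <= v -> tkern t v <= tkern t u.
Proof.
move=> uv.
have base_gt0 (z : R) : 0 < (1 + z ^+ 2 / T) `^ ((T + 1) / 2).
  by apply: powR_gt0; have := sqr_divT_ge0 z; lra.
rewrite /tkern !powRN lef_pV2 ?posrE ?base_gt0 //.
apply: ge0_ler_powR; first by rewrite divr_ge0 // addr_ge0 // ltW.
- by rewrite nnegrE addr_ge0.
- by rewrite nnegrE addr_ge0.
rewrite lerD2l ler_pM2r ?invr_gt0 //.
by move: uv; rewrite ler_norml => /andP[]; nra.
Qed.

Lemma tkern_le_cauchy (u : R) : tkern t u <= T * (1 + u ^+ 2)^-1.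
Proof.
have T_ge1 : 1 <= T by rewrite ler1n.
have base_ge1 : 1 <= 1 + u ^+ 2 / T by rewrite lerDl.
apply: (@le_trans _ _ ((1 + u ^+ 2 / T) `^ (-1))).
  by rewrite ler_powR // lerN2 ler_pdivlMr ?mul1r //; lra.
rewrite powR_inv1; last lra.
have -> : (1 + u ^+ 2 / T)^-1 = T * (T + u ^+ 2)^-1.
  by field; rewrite !gt_eqF //; have := sqr_ge0 u; lra.
rewrite ler_wpM2l ?(ltW T_gt0) // lef_pV2 ?posrE; have := sqr_ge0 u; lra.
Qed.

Lemma integral_tkern_lty : (\int[mu]_u (tkern t u)%:E < +oo)%E.
Proof.
have cauchy_meas : measurable_fun setT (fun u : R => (1 + u ^+ 2)^-1).
  exact: continuous_measurable_fun (@continuous_cauchy R).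
apply: (@le_lt_trans _ _ (\int[mu]_u (T%:E * ((1 + u ^+ 2)^-1)%:E))%E).
  apply: ge0_le_integral => //.
  - by move=> u _; rewrite lee_fin; exact: ltW (tkern_gt0 _).
  - by apply/measurable_EFinP; exact: measurable_tkern.
  - under eq_fun do rewrite -EFinM.
    by apply/measurable_EFinP; exact: measurable_funM.
  - by move=> u _; rewrite -EFinM lee_fin tkern_le_cauchy.
rewrite ge0_integralZl //.
- by rewrite integral_cauchy -EFinM ltry.
- by apply/measurable_EFinP.
- by move=> u _; rewrite lee_fin invr_ge0 addr_ge0 ?sqr_ge0.
Qed.

Lemma integral_tkernE : (\int[mu]_u (tkern t u)%:E = ((student_c R t)^-1)%:E)%E.
Proof.
have tkern_ge0 (u : R) : (0 <= (tkern t u)%:E)%E by rewrite lee_fin ltW ?tkern_gt0.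
have int_ge0 : (0 <= \int[mu]_u (tkern t u)%:E)%E by exact: integral_ge0.
rewrite /student_c invrK fineK // ge0_fin_numE //; exact: integral_tkern_lty.
Qed.

Lemma student_c_gt0 : 0 < student_c R t.
Proof.
suff : (0 < ((student_c R t)^-1)%:E)%E by rewrite lte_fin invr_gt0.
rewrite -integral_tkernE.
apply: lt_le_trans (@lbound_le_integral _ setT _ 0 1 (tkern t 1) _ _ _ _ _ _ _) => //.
- by rewrite subr0 mulr1 lte_fin tkern_gt0.
- exact: measurable_tkern.
- by move=> u _; exact: ltW (tkern_gt0 _).
- by move=> u /andP[u_ge0 u_le1]; apply: tkern_le; rewrite ger0_norm.
- exact: ltW (tkern_gt0 _).
Qed.

Lemma student_pdf_ge0 (u : R) : 0 <= student_pdf t u.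
Proof. by apply: mulr_ge0; apply: ltW; [exact: student_c_gt0 | exact: tkern_gt0]. Qed.

Lemma measurable_student_pdf : measurable_fun setT (@student_pdf R t).
Proof. by apply: measurable_funM => //; exact: measurable_tkern. Qed.

Lemma integral_student_pdf : (\int[mu]_u (student_pdf t u)%:E = 1)%E.
Proof.
under eq_integral do rewrite EFinM.
rewrite ge0_integralZl //.
- by rewrite integral_tkernE -EFinM mulfV // gt_eqF // student_c_gt0.
- by apply/measurable_EFinP; exact: measurable_tkern.
- by move=> u _; rewrite lee_fin ltW ?tkern_gt0.
- by rewrite lee_fin ltW // student_c_gt0.
Qed.

Lemma student_Pr_abs_leE (b : R) :
  ((student_Pr_abs_le t b)%:E =
   \int[mu]_(u in [set u : R | (`|u| <= b)%R]) (student_pdf t u)%:E)%E.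
Proof.
have pdf_ge0 (u : R) : (0 <= (student_pdf t u)%:E)%E by rewrite lee_fin student_pdf_ge0.
rewrite fineK // ge0_fin_numE; last exact: integral_ge0.
rewrite (@le_lt_trans _ _ 1%E) ?ltry // -integral_student_pdf.
apply: ge0_subset_integral => //; first by rewrite set_abs_le_itv.
by apply/measurable_EFinP; exact: measurable_student_pdf.
Qed.

Local Notation ratio := (@powR_ratio R (T / (T + 1))).

Let r_gt0 : 0 < T / (T + 1).
Proof. by rewrite divr_gt0 // ltr_wpDr. Qed.

Let r_lt1 : T / (T + 1) < 1.
Proof. by rewrite ltr_pdivrMr ?mul1r ?ltrDl // ltr_wpDr. Qed.

Lemma pdens_ge0 (x y : R) : 0 <= pdens t x y.
Proof. by rewrite !mulr_ge0 ?powR_ge0 // ltW // student_c_gt0. Qed.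

Lemma continuous_pdens (x : R) : continuous (pdens t x).
Proof.
have base_cont :
    continuous (fun y : R => (1 + x ^+ 2 / T + y ^+ 2 / T) `^ (- ((T + 1) / 2))).
  apply: continuous_powR_pos => y; last first.
    by have := sqr_divT_ge0 x; have := sqr_divT_ge0 y; lra.
  apply: cvgD; first exact: cvg_cst.
  by apply: cvgM; [exact: exprn_continuous | exact: cvg_cst].
by move=> y; apply: cvgM; [exact: cvg_cst | exact: base_cont].
Qed.

Lemma measurable_pdens (x : R) : measurable_fun setT (pdens t x).
Proof. exact: continuous_measurable_fun (continuous_pdens x). Qed.

Lemma pdens0 (y : R) : pdens t 0 y = student_pdf t y.
Proof. by rewrite /pdens expr0n /= mul0r addr0 powR1 mulr1. Qed.

Lemma pdens_powR_ratio (x y : R) :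
  pdens t x y = student_c R t * ratio (y ^+ 2 / T) (1 + x ^+ 2 / T) `^ ((T + 1) / 2).
Proof.
have S_ge0 : 0 <= 1 + x ^+ 2 / T by have := sqr_divT_ge0 x; lra.
have SV_gt0 : 0 < 1 + x ^+ 2 / T + y ^+ 2 / T.
  by have := sqr_divT_ge0 x; have := sqr_divT_ge0 y; lra.
rewrite /pdens /powR_ratio -mulrA; congr (_ * _).
rewrite powRM ?powR_ge0 ?invr_ge0 ?ltW // -powRrM.
have -> : T / (T + 1) * ((T + 1) / 2) = T / 2 by field; rewrite gt_eqF // ltr_wpDl.
by rewrite -(powR_inv1 (ltW SV_gt0)) -powRrM mulN1r.
Qed.

Lemma pdens_le (x z y : R) :
  ratio (y ^+ 2 / T) (1 + z ^+ 2 / T) <= ratio (y ^+ 2 / T) (1 + x ^+ 2 / T) ->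
  pdens t z y <= pdens t x y.
Proof.
have ratio_ge0 (u : R) : 0 <= ratio (y ^+ 2 / T) (1 + u ^+ 2 / T).
  by rewrite divr_ge0 ?powR_ge0 //; have := sqr_divT_ge0 u; have := sqr_divT_ge0 y; lra.
move=> le_ratio; rewrite !pdens_powR_ratio.
apply: ler_wpM2l; first exact: ltW student_c_gt0.
by apply: ge0_ler_powR; rewrite ?nnegrE ?ratio_ge0 // divr_ge0 // addr_ge0 // ltW.
Qed.

Lemma abs_le_hfun (a y : R) : 0 < a ->
  (`|y| <= hfun t a) =
  (ratio (y ^+ 2 / T) (1 + a ^+ 2 / T) <= ratio (y ^+ 2 / T) 1).
Proof.
move=> a_gt0.
set V := y ^+ 2 / T; set B := 1 + a ^+ 2 / T; set Q := B `^ (T / (T + 1)).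
have V_ge0 : 0 <= V := sqr_divT_ge0 y.
have B_gt1 : 1 < B by rewrite ltrDl divr_gt0 // exprn_gt0.
have Q_gt1 : 1 < Q.
  by have := @gt0_ltr_powR R _ r_gt0 1 B; rewrite powR1; apply; rewrite ?nnegrE; lra.
have Q_le_B : Q <= B by apply: ler1_powR; apply: ltW.
have a2E : a ^+ 2 = T * (B - 1) by rewrite /B addrAC subrr add0r mulrC divfK ?gt_eqF.
have y2E : y ^+ 2 = T * V by rewrite /V mulrC divfK ?gt_eqF.
have h_radicand_ge0 : 0 <= a ^+ 2 / (Q - 1) - T.
  by rewrite subr_ge0 ler_pdivlMr ?subr_gt0 // a2E ler_pM2l //; lra.
transitivity (Q * (1 + V) <= B + V).
  rewrite /hfun -/B -/Q -sqrtr_sqr ler_sqrt // lerBrDr ler_pdivlMr ?subr_gt0 //.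
  have -> : (y ^+ 2 + T) * (Q - 1) = T * (Q * (1 + V) - (1 + V)) by rewrite y2E; ring.
  rewrite a2E ler_pM2l // lerBlDr.
  by congr (_ <= _); ring.
rewrite /powR_ratio powR1 mul1r ler_pdivrMr; last lra.
by rewrite -/Q [_^-1 * _]mulrC ler_pdivlMr //; lra.
Qed.

Lemma pmin_le_pdens (a x y : R) : 0 < a -> `|x| <= a -> pmin t a y <= pdens t x y.
Proof.
move=> a_gt0 xa.
have S_ge1 : 1 <= 1 + x ^+ 2 / T by rewrite lerDl.
have S_le_B : 1 + x ^+ 2 / T <= 1 + a ^+ 2 / T.
  rewrite lerD2l ler_pM2r ?invr_gt0 //.
  by move: xa; rewrite ler_norml => /andP[]; nra.
have := @powR_ratio_ge_min R _ r_gt0 r_lt1 _ _ _ (sqr_divT_ge0 y) S_ge1 S_le_B.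
rewrite /pmin abs_le_hfun //; case: ifPn => [le_ratio|].
- by rewrite min_r //; exact: pdens_le.
- rewrite -ltNge => /ltW lt_ratio; rewrite min_l // => le_ratio.
  by apply: pdens_le; rewrite expr0n mul0r addr0.
Qed.

Lemma pdens_scale (a s u : R) : 0 < s -> s ^+ 2 = 1 + a ^+ 2 / T ->
  pdens t a (s * u) * s = student_pdf t u.
Proof.
move=> s_gt0 s2E.
have s_neq0 : s != 0 by rewrite gt_eqF.
have s_powE : (s ^+ 2) `^ (T / 2) * (s ^+ 2) `^ (- ((T + 1) / 2)) * s = 1.
  rewrite -powR_mulrn ?ltW // -!powRrM -{3}(powRr1 (ltW s_gt0)).
  rewrite -!powRD ?s_neq0 ?implybT //.
  by rewrite [X in _ `^ X](_ : _ = 0) ?powRr0 //; field.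
rewrite /pdens /student_pdf /tkern exprMn -s2E.
have -> : s ^+ 2 + s ^+ 2 * u ^+ 2 / T = s ^+ 2 * (1 + u ^+ 2 / T) by ring.
rewrite powRM ?sqr_ge0 //; last by have := sqr_divT_ge0 u; lra.
by rewrite -[RHS]mulr1 -[X in _ = _ * X]s_powE; ring.
Qed.

Lemma integral_pdens_abs_le (a h : R) : 0 <= h ->
  (\int[mu]_(y in [set y : R | (`|y| <= h)%R]) (pdens t a y)%:E =
   (student_Pr_abs_le t ((1 + a ^+ 2 / T) `^ (- (1 / 2)) * h))%:E)%E.
Proof.
move=> h_ge0.
set s := (1 + a ^+ 2 / T) `^ (1 / 2).
have s_gt0 : 0 < s by apply: powR_gt0; have := sqr_divT_ge0 a; lra.
have s2E : s ^+ 2 = 1 + a ^+ 2 / T.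
  rewrite -powR_mulrn ?powR_ge0 // -powRrM mul1r mulVf ?pnatr_eq0 // powRr1 //.
  by have := sqr_divT_ge0 a; lra.
rewrite [RHS]student_Pr_abs_leE powRN -/s -{1}(mulVKf (lt0r_neq0 s_gt0) h).
rewrite !(@set_abs_le_itv R).
rewrite integral_itv_scale; last 3 first.
- exact: s_gt0.
- by rewrite mulr_ge0 // invr_ge0 ltW.
- exact: continuous_pdens.
by apply: eq_integral => u _; rewrite pdens_scale.
Qed.

Lemma pmin_ge0 (a y : R) : 0 <= pmin t a y.
Proof. by rewrite /pmin; case: ifP => _; exact: pdens_ge0. Qed.

Lemma measurable_pmin (a : R) : measurable_fun setT (pmin t a).
Proof.
set E := [set y : R | `|y| <= hfun t a].
have E_meas : measurable E by rewrite /E set_abs_le_itv.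
rewrite -(setUv E); apply/measurable_funU => //; first exact: measurableC.
split.
- apply: (eq_measurable_fun (pdens t a)); last first.
    exact: measurable_funTS (measurable_pdens a).
  by move=> y; rewrite inE /= => hy; rewrite /pmin hy.
- apply: (eq_measurable_fun (pdens t 0)); last first.
    exact: measurable_funTS (measurable_pdens 0).
  by move=> y; rewrite inE /= => /negP hy; rewrite /pmin (negbTE hy).
Qed.

Lemma integral_pmin (a : R) : 0 < a ->
  (\int[mu]_y (pmin t a y)%:E = (beta t a)%:E)%E.
Proof.
move=> a_gt0.
set h := hfun t a; set E := [set y : R | `|y| <= h].
have E_meas : measurable E by rewrite /E set_abs_le_itv.
rewrite (@ge0_integralT_setUC _ _ _ E_meas (measurable_pmin a) (pmin_ge0 a)).
have -> : (\int[mu]_(y in E) (pmin t a y)%:E = \int[mu]_(y in E) (pdens t a y)%:E)%E.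
  by apply: eq_integral => y; rewrite inE /= => hy; rewrite /pmin hy.
have -> : (\int[mu]_(y in ~` E) (pmin t a y)%:E =
           \int[mu]_(y in ~` E) (student_pdf t y)%:E)%E.
  apply: eq_integral => y; rewrite inE /= => /negP hy.
  by rewrite /pmin (negbTE hy) pdens0.
have := @ge0_integralT_setUC _ _ _ E_meas measurable_student_pdf student_pdf_ge0.
rewrite integral_student_pdf -student_Pr_abs_leE.
rewrite integral_pdens_abs_le ?sqrtr_ge0 //.
set X := (\int[mu]_(y in ~` E) _)%E => split1.
have -> : X = (1 - student_Pr_abs_le t h)%:E.
  by rewrite EFinB split1 [_ + X]addeC addeK.
by rewrite -EFinD /beta addrC.
Qed.

Lemma beta_gt0 (a : R) : 0 < a -> 0 < beta t a.
Proof.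
move=> a_gt0; rewrite -lte_fin -integral_pmin //.
set h := hfun t a; have h_ge0 : 0 <= h := sqrtr_ge0 _.
have pdf_gt0 : 0 < student_pdf t (h + 2).
  by rewrite mulr_gt0 ?student_c_gt0 ?tkern_gt0.
apply: (lt_le_trans _ (@lbound_le_integral _ setT (pmin t a) (h + 1) (h + 2)
  (student_pdf t (h + 2)) _ _ _ _ _ _ _)).
- by rewrite lte_fin mulr_gt0 //; lra.
- exact: measurableT.
- exact: subsetT.
- exact: measurable_pmin.
- by move=> y _; exact: pmin_ge0.
- move=> y /andP[y_ge y_le].
  rewrite /pmin ifF ?pdens0; last first.
    by apply/negbTE; rewrite -ltNge -/h (lt_le_trans _ (ler_norm y)) //; lra.
  rewrite ler_pM2l ?student_c_gt0 // tkern_le //.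
  by rewrite ler_norml; apply/andP; split; lra.
- exact: ltW.
- lra.
Qed.

Lemma Pkern_ge_beta_nu (a x : R) (A : set R) : 0 < a -> measurable A ->
  ((beta t a * \1_(`[- a, a]) x)%:E * nu t a A <= Pkern t x A)%E.
Proof.
move=> a_gt0 A_meas; rewrite indicE.
have [x_in|_] := boolP (x \in `[- a, a]%classic); last first.
  rewrite mulr0 mul0e; apply: integral_ge0 => y _.
  by rewrite lee_fin pdens_ge0.
have xa : `|x| <= a by move: x_in; rewrite inE /= in_itv /= ler_norml.
have beta_pos : 0 < beta t a := beta_gt0 a a_gt0.
rewrite mulr1 /nu /Pkern -ge0_integralZl //; last 3 first.
- apply/measurable_EFinP; apply: measurable_funM => //.
  exact: measurable_funTS (measurable_pmin a).
- by move=> y _; rewrite lee_fin divr_ge0 ?pmin_ge0 // ltW.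
- by rewrite lee_fin ltW.
under eq_integral do rewrite -EFinM mulrC divfK ?gt_eqF //.
apply: ge0_le_integral => //.
- by move=> y _; rewrite lee_fin pmin_ge0.
- by apply/measurable_EFinP; exact: measurable_funTS (measurable_pmin a).
- by apply/measurable_EFinP; exact: measurable_funTS (measurable_pdens x).
- by move=> y _; rewrite lee_fin pmin_le_pdens.
Qed.

End student_t_transition.

Theorem proposition7p2 (R : realType) (t : nat) (a : R) :
  (1 <= t)%N -> 0 < a ->
  (forall x y : R, `|x| <= a -> pmin t a y <= pdens t x y) /\
  (0 < beta t a /\
   (\int[@lebesgue_measure R]_y (pmin t a y)%:E = (beta t a)%:E)%E) /\
  (forall (x : R) (A : set R), measurable A ->
     ((beta t a * \1_(`[- a, a]) x)%:E * nu t a A <= Pkern t x A)%E).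
Proof.
move=> t_ge1 a_gt0; split; first by move=> x y; exact: pmin_le_pdens.
split; first by split; [exact: beta_gt0 | exact: integral_pmin].
by move=> x A; exact: Pkern_ge_beta_nu.
Qed.
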